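(* In any finite ELP, let $\pi$ be a policy, $\rho_\pi$ its stationary distribution, and define $\lambda_\pi(s,a)=\rho_\pi(s)\pi(a|s)\mathbb E_\pi[T]$. Then for every $Q\in\mathcal Q$, $$\mathcal L_\pi(Q,\lambda_\pi)=J(\pi)+\sum_{s\notin\mathcal S_\bot}\sum_{a\in\mathcal A}\lambda_\pi(s,a)\Big(\max_{\bar a}Q(s,\bar a)-Q(s,a)\Big).$$
   Context: A finite ELP is $(\mathcal S,\mathcal A,P,R,\rho)$ with finite $\mathcal S,\mathcal A$, reward $R:\mathcal S\to\mathbb R$, transitions $P(s'|s,a)$, distribution $\rho$, and nonempty terminal set $\mathcal S_\bot$. Under a policy $\pi$, $S_0$ is a fixed terminal state, $A_t\sim\pi(\cdot|S_t)$, $S_{t+1}\sim P(\cdot|S_t,A_t)$, and $T=\inf\{t\ge1:S_t\in\mathcal S_\bot\}$. ELP conditions: $\mathbb E_\pi[T]<\infty$ for every $\pi$; $P(s'|s,a)=\rho(s')$ for all $s\in\mathcal S_\bot$, all $a,s'$; every state is reachable under some policy. $J(\pi)=\mathbb E_\pi[\sum_{t=1}^TR(S_t)]$. $\mathcal Q$ = all functions $\mathcal S\times\mathcal A\to\mathbb R$. $\mathcal BQ(s,a)=\sum_{s'}P(s'|s,a)\big(R(s')+\mathbf 1[s'\notin\mathcal S_\bot]\max_{a'}Q(s',a')\big)$. $\mathcal L_\pi(Q,\lambda)=\mathbb E_\pi[Q(S_T,A_T)]+\sum_{s,a}\lambda(s,a)(\mathcal BQ(s,a)-Q(s,a))$ with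 $A_T\sim\pi(\cdot|S_T)$. In a finite ELP, the Markov chain on $\mathcal S$ with kernel $\sum_aP(s'|s,a)\pi(a|s)$ has a unique stationary distribution, denoted $\rho_\pi$. *)

From HB Require Import structures.
From mathcomp Require Import all_boot all_order all_algebra.
From mathcomp Require Import all_classical all_reals topology normedtype sequences.
Set Implicit Arguments. Unset Strict Implicit. Unset Printing Implicit Defensive.
Import Order.TTheory GRing.Theory Num.Theory numFieldNormedType.Exports.
Local Open Scope ring_scope.

Section ELP.
Variables (R : realType) (S A : finType).

Definition is_dist (T : finType) (d : T -> R) : Prop :=
  (forall x, 0 <= d x) /\ \sum_(x : T) d x = 1.

(* transition kernel P s a s' = P(s'|s,a) ; policy pi s a = pi(a|s) *)
Definition is_kernel (P : S -> A -> S -> R) : Prop := forall s a, is_dist (P s a).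
Definition is_policy (pi : S -> A -> R) : Prop := forall s, is_dist (pi s).

Definition ssum (u : nat -> R) : R := limn (series u).
Definition summable (u : nat -> R) : Prop := cvgn (series u).

(* a trajectory prefix (S_0,A_0),...,(S_n,A_n) *)
Definition traj (n : nat) := {ffun 'I_n.+1 -> (S * A)%type}.
Definition st n (w : traj n) (i : nat) : S := (w (inord i)).1.
Definition act n (w : traj n) (i : nat) : A := (w (inord i)).2.

Variables (P : S -> A -> S -> R) (term : {set S}) (s0 : S).

Definition path_prob (pi : S -> A -> R) n (w : traj n) : R :=
  (st w 0 == s0)%:R * pi (st w 0) (act w 0) *
  \prod_(i < n) (P (st w i) (act w i) (st w i.+1) * pi (st w i.+1) (act w i.+1)).

(* the event {T = n}, T = inf { t >= 1 : S_t terminal } *)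
Definition stops_at n (w : traj n) : bool :=
  (0 < n)%N && [forall i : 'I_n, (0 < i)%N ==> (st w i \notin term)]
  && (st w n \in term).

(* E_pi[ g(T, (S_0,A_0,...,S_T,A_T)) ; T < oo ] *)
Definition Estop (pi : S -> A -> R) (g : forall n, traj n -> R) : R :=
  ssum (fun n => \sum_(w : traj n | stops_at w) path_prob pi w * g n w).

Definition summable_stop (pi : S -> A -> R) (g : forall n, traj n -> R) : Prop :=
  summable (fun n => \sum_(w : traj n | stops_at w) path_prob pi w * g n w).

Definition ProbT_finite pi : R := Estop pi (fun _ _ => 1).
Definition ET pi : R := Estop pi (fun n _ => n%:R).
Definition Jret (Rw : S -> R) pi : R :=
  Estop pi (fun n w => \sum_(1 <= t < n.+1) Rw (st w t)).
Definition EQT (Q : S -> A -> R) pi : R :=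
  Estop pi (fun n w => Q (st w n) (act w n)).

(* P_pi(S_t = s) for the (unstopped) process *)
Definition prob_state pi t (s : S) : R :=
  \sum_(w : traj t | st w t == s) path_prob pi w.

(* max_a Q(s,a) (A is nonempty whenever a policy exists) *)
Definition qmax (Q : S -> A -> R) (s : S) : R :=
  if [pick a : A] is Some a0 then \big[Num.max/Q s a0]_(a : A) Q s a else 0.

Definition bellman (Rw : S -> R) (Q : S -> A -> R) (s : S) (a : A) : R :=
  \sum_(s' : S) P s a s' * (Rw s' + (s' \notin term)%:R * qmax Q s').

Definition lagr (Rw : S -> R) pi (Q : S -> A -> R) (lam : S -> A -> R) : R :=
  EQT Q pi + \sum_(s : S) \sum_(a : A) lam s a * (bellman Rw Q s a - Q s a).

Definition is_stationary pi (d : S -> R) : Prop :=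
  is_dist d /\ forall s', d s' = \sum_(s : S) \sum_(a : A) P s a s' * pi s a * d s.

Definition is_ELP (Rw : S -> R) (rho : S -> R) : Prop :=
  [/\ is_kernel P, is_dist rho, term != finset.set0 /\ s0 \in term,
      (forall s a, s \in term -> forall s', P s a s' = rho s')
    & (forall pi, is_policy pi ->
         ProbT_finite pi = 1 /\ summable_stop pi (fun n _ => n%:R))] /\
  (forall s, exists pi, is_policy pi /\ exists t, 0 < prob_state pi t s).

End ELP.

From HB Require Import structures.
From mathcomp Require Import all_boot all_order all_algebra.
From mathcomp Require Import all_classical all_reals topology normedtype sequences.
From mathcomp Require Import ring lra.
Import Order.TTheory GRing.Theory Num.Theory numFieldNormedType.Exports.
Local Open Scope classical_set_scope.
Local Open Scope ring_scope.
Set Implicit Arguments. Unset Strict Implicit. Unset Printing Implicit Defensive.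

(* Let [mu(s)] be the expected number of visits of an episode to [s] at times
   [1..T].  Summing over paths, [E[T]], [J(pi)] and [E[Q(S_T,A_T)]] are the
   integrals of [1], [R] and [s |-> 1[s terminal] sum_a pi(a|s) Q(s,a)]
   against [mu].  Let [K'] be the state kernel of [pi] with the transitions out
   of terminal states removed.  Then [mu = rho + mu K'], while the stationary
   law satisfies [rho_pi = a rho + rho_pi K'] with [a = rho_pi(S_bot)].  So
   [rho_pi - a mu] is a nonnegative [K']-invariant measure; its support is
   closed and nonterminal, and a policy reaching it and then following [pi]
   would never terminate.  Hence [mu = E[T] rho_pi], and the identity reduces
   to stationarity applied to the Bellman term. *)

Section Trajectories.
Variables (S A : finType).

Definition traj_rcons n (w : traj S A n) (x : S * A) : traj S A n.+1 :=
  [ffun i : 'I_n.+2 => if unlift ord_max i is Some j then w j else x].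

Lemma big_traj_rcons (V : nmodType) n (F : traj S A n.+1 -> V) :
  \sum_(w : traj S A n.+1) F w = \sum_(w : traj S A n) \sum_(x : S * A) F (traj_rcons w x).
Proof.
rewrite pair_big /= (reindex (fun p : traj S A n * (S * A) => traj_rcons p.1 p.2)) //=.
exists (fun w => ([ffun j => w (lift ord_max j)], w ord_max)).
  move=> [w x] _ /=; congr pair; last by rewrite ffunE unlift_none.
  by apply/ffunP => j; rewrite !ffunE liftK.
move=> w _; apply/ffunP => i; rewrite ffunE.
by case: unliftP => [j ->|->]; rewrite ?ffunE.
Qed.

Lemma big_traj0 (V : nmodType) (F : traj S A 0 -> V) :
  \sum_(w : traj S A 0) F w = \sum_(x : S * A) F [ffun => x].
Proof.
rewrite (reindex (fun x : S * A => [ffun => x] : traj S A 0)) //=.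
exists (fun w : traj S A 0 => w ord0); first by move=> x _; rewrite ffunE.
by move=> w _; apply/ffunP => i; rewrite ffunE (ord1 i).
Qed.

Lemma traj_rcons_inord n (w : traj S A n) x i :
  (i <= n)%N -> traj_rcons w x (inord i) = w (inord i).
Proof.
move=> le_in; rewrite ffunE.
have -> : (inord i : 'I_n.+2) = lift ord_max (inord i : 'I_n.+1).
  apply: val_inj; rewrite /= /bump /= !inordK ?ltnS ?(leq_trans le_in) //.
  by rewrite leqNgt ltnS le_in.
by rewrite liftK.
Qed.

Lemma traj_rcons_last n (w : traj S A n) x : traj_rcons w x (inord n.+1) = x.
Proof.
rewrite ffunE.
have -> : (inord n.+1 : 'I_n.+2) = ord_max by apply: val_inj; rewrite /= inordK.
by rewrite unlift_none.
Qed.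

Lemma st_rcons n (w : traj S A n) x i : (i <= n)%N -> st (traj_rcons w x) i = st w i.
Proof. by move=> le_in; rewrite /st traj_rcons_inord. Qed.

Lemma act_rcons n (w : traj S A n) x i : (i <= n)%N -> act (traj_rcons w x) i = act w i.
Proof. by move=> le_in; rewrite /act traj_rcons_inord. Qed.

Lemma st_rcons_last n (w : traj S A n) x : st (traj_rcons w x) n.+1 = x.1.
Proof. by rewrite /st traj_rcons_last. Qed.

Lemma act_rcons_last n (w : traj S A n) x : act (traj_rcons w x) n.+1 = x.2.
Proof. by rewrite /act traj_rcons_last. Qed.

Lemma st_traj0 (x : S * A) i : st ([ffun => x] : traj S A 0) i = x.1.
Proof. by rewrite /st ffunE. Qed.

Lemma act_traj0 (x : S * A) i : act ([ffun => x] : traj S A 0) i = x.2.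
Proof. by rewrite /act ffunE. Qed.

Lemma big_pairE (V : nmodType) (F : S * A -> V) :
  \sum_(x : S * A) F x = \sum_s \sum_a F (s, a).
Proof. by rewrite pair_big; apply: eq_bigr => -[]. Qed.

End Trajectories.

Section WeightedMarginals.
Variables (R : realType) (S A : finType) (P : S -> A -> S -> R) (s0 : S).
Variable pi : S -> A -> R.

Definition ptrans (s s' : S) : R := \sum_a pi s a * P s a s'.

Fixpoint wmarg (c : nat -> S -> R) (n : nat) (s' : S) : R :=
  if n is m.+1 then \sum_s wmarg c m s * c m s * ptrans s s' else (s' == s0)%:R.

Fixpoint wreward (c : nat -> S -> R) (Rw : S -> R) (n : nat) (s' : S) : R :=
  if n is m.+1 then \sum_s wreward c Rw m s * c m s * ptrans s s' + wmarg c m.+1 s' * Rw s'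
  else 0.

Lemma wmargS c n s' : wmarg c n.+1 s' = \sum_s wmarg c n s * c n s * ptrans s s'.
Proof. by []. Qed.

Lemma path_prob_rcons n (w : traj S A n) x :
  path_prob P s0 pi (traj_rcons w x) =
  path_prob P s0 pi w * (P (st w n) (act w n) x.1 * pi x.1 x.2).
Proof.
rewrite /path_prob big_ord_recr /= st_rcons_last act_rcons_last !st_rcons // !act_rcons //.
rewrite -!mulrA; congr (_ * (_ * (_ * _))); apply: eq_bigr => i _.
by rewrite !st_rcons ?act_rcons // ?(ltnW (ltn_ord i)) // ltn_ord.
Qed.

Lemma sum_ptrans_step (V c : S -> R) (L : S -> A -> R) :
  \sum_s V s * \sum_a pi s a * (c s * \sum_s' \sum_a' P s a s' * pi s' a' * L s' a') =
  \sum_s' (\sum_s V s * c s * ptrans s s') * \sum_a' pi s' a' * L s' a'.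
Proof.
pose T s a s' a' := V s * c s * pi s a * P s a s' * pi s' a' * L s' a'.
transitivity (\sum_s \sum_a \sum_s' \sum_a' T s a s' a').
  apply: eq_bigr => s _; rewrite mulr_sumr; apply: eq_bigr => a _.
  rewrite !mulr_sumr; apply: eq_bigr => s' _; rewrite !mulr_sumr; apply: eq_bigr => a' _.
  by rewrite /T; ring.
under eq_bigr do rewrite exchange_big.
rewrite exchange_big /=; apply: eq_bigr => s' _; rewrite mulr_suml.
apply: eq_bigr => s _; rewrite /ptrans mulr_sumr mulr_suml; apply: eq_bigr => a _.
by rewrite mulr_sumr; apply: eq_bigr => a' _; rewrite /T; ring.
Qed.

Definition wstep (c : nat -> S -> R) n (L : S -> A -> R) (s : S) (a : A) : R :=
  c n s * \sum_s' \sum_a' P s a s' * pi s' a' * L s' a'.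

Lemma sum_path_rcons (c : nat -> S -> R) n (G : traj S A n -> R) (L : S -> A -> R) :
  \sum_(w : traj S A n) \sum_(x : S * A) path_prob P s0 pi (traj_rcons w x) *
    (\prod_(i < n.+1) c i (st (traj_rcons w x) i)) * G w * L x.1 x.2 =
  \sum_(w : traj S A n) path_prob P s0 pi w * (\prod_(i < n) c i (st w i)) * G w *
    wstep c n L (st w n) (act w n).
Proof.
apply: eq_bigr => w _; rewrite big_pairE /wstep !mulr_sumr; apply: eq_bigr => s _.
rewrite !mulr_sumr; apply: eq_bigr => a _.
rewrite path_prob_rcons big_ord_recr /= st_rcons //.
under eq_bigr => i _ do rewrite st_rcons ?(ltnW (ltn_ord i)) //.
by ring.
Qed.

Lemma sum_path_wmarg (c : nat -> S -> R) n (L : S -> A -> R) :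
  \sum_(w : traj S A n) path_prob P s0 pi w * (\prod_(i < n) c i (st w i)) *
     L (st w n) (act w n) =
  \sum_s wmarg c n s * \sum_a pi s a * L s a.
Proof.
elim: n L => [|n IH] L.
  rewrite big_traj0 big_pairE; apply: eq_bigr => s _; rewrite mulr_sumr.
  by apply: eq_bigr => a _; rewrite /path_prob !st_traj0 !act_traj0 !big_ord0 !mulr1 mulrA.
rewrite big_traj_rcons -sum_ptrans_step -IH.
transitivity (\sum_(w : traj S A n) \sum_(x : S * A) path_prob P s0 pi (traj_rcons w x) *
    (\prod_(i < n.+1) c i (st (traj_rcons w x) i)) * (fun _ => 1) w * L x.1 x.2).
  by apply: eq_bigr => w _; apply: eq_bigr => x _; rewrite st_rcons_last act_rcons_last mulr1.
by rewrite sum_path_rcons; apply: eq_bigr => w _; rewrite mulr1.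
Qed.

Lemma sum_path_wreward (c : nat -> S -> R) (Rw : S -> R) n (L : S -> A -> R) :
  \sum_(w : traj S A n) path_prob P s0 pi w * (\prod_(i < n) c i (st w i)) *
     (\sum_(1 <= t < n.+1) Rw (st w t)) * L (st w n) (act w n) =
  \sum_s wreward c Rw n s * \sum_a pi s a * L s a.
Proof.
elim: n L => [|n IH] L.
  rewrite big1 ?big1 // => [s _|w _]; first by rewrite mul0r.
  by rewrite big_geq // mulr0 mul0r.
have split_last (w : traj S A n.+1) : \sum_(1 <= t < n.+2) Rw (st w t) =
    \sum_(1 <= t < n.+1) Rw (st w t) + Rw (st w n.+1) by rewrite big_nat_recr.
under eq_bigr do rewrite split_last mulrDr mulrDl -(mulrA _ (Rw _)).
rewrite big_split /= (sum_path_wmarg c n.+1 (fun s a => Rw s * L s a)).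
rewrite big_traj_rcons.
transitivity (\sum_(w : traj S A n) \sum_(x : S * A) path_prob P s0 pi (traj_rcons w x) *
    (\prod_(i < n.+1) c i (st (traj_rcons w x) i)) *
    (\sum_(1 <= t < n.+1) Rw (st w t)) * L x.1 x.2 +
  \sum_s wmarg c n.+1 s * \sum_a pi s a * (Rw s * L s a)).
  congr (_ + _); apply: eq_bigr => w _; apply: eq_bigr => x _.
  rewrite st_rcons_last act_rcons_last (@eq_big_nat _ _ _ 1 n.+1 _ (fun t => Rw (st w t))) //.
  by move=> t /andP[_ le_tn]; rewrite st_rcons.
rewrite sum_path_rcons IH sum_ptrans_step -big_split /=; apply: eq_bigr => s _.
rewrite mulrDl -mulrA; congr (_ + _); congr (_ * _).
by rewrite mulr_sumr; apply: eq_bigr => a _; ring.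
Qed.

End WeightedMarginals.

Lemma cvg_fsum (R : realType) (I : finType) (f : I -> nat -> R) (l : I -> R) :
  (forall i, f i n @[n --> \oo] --> l i) -> \sum_i f i n @[n --> \oo] --> \sum_i l i.
Proof. by move=> fl; apply: cvg_big => //; exact: add_continuous. Qed.

Lemma nondecreasing_bounded_cvgn (R : realType) (u : nat -> R) (M : R) :
  (forall n, u n <= u n.+1) -> (forall n, u n <= M) -> cvgn u.
Proof.
move=> u_nd u_le; apply: nondecreasing_is_cvgn; first exact/nondecreasing_seqP.
by exists M => _ [n _ <-].
Qed.

Section Episode.
Variables (R : realType) (S A : finType) (P : S -> A -> S -> R) (term : {set S}) (s0 : S).
Variables (rho : S -> R) (pi : S -> A -> R).

(* [alive i s] indicates [T > i] at [S_i = s]; at time 0 it is 1 although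
   [S_0] is terminal, because [T] only counts times [t >= 1]. *)
Definition alive (i : nat) (s : S) : R := if i == 0%N then 1 else (s \notin term)%:R.
Definition term_ind (s : S) : R := (s \in term)%:R.

(* [mass n s = P(S_n = s, T >= n)] and [rew Rw n s = E[sum_(1<=t<=n) Rw(S_t); S_n = s, T >= n]]. *)
Local Notation mass := (wmarg P s0 pi alive).
Local Notation rew := (wreward P s0 pi alive).

Lemma prod_aliveE n (w : traj S A n) :
  \prod_(i < n) alive i (st w i) =
  [forall i : 'I_n, (0 < i)%N ==> (st w i \notin term)]%:R.
Proof.
case: forallP => [alive_w|/forallP].
  rewrite big1 // => i _; rewrite /alive; case: eqP => // /eqP i_neq0.
  by move: (alive_w i); rewrite lt0n i_neq0 /= => ->.
rewrite negb_forall => /existsP[i]; rewrite negb_imply lt0n => /andP[i_neq0 st_i].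
by rewrite (bigD1 i) //= /alive (negPf i_neq0) (negPf st_i) mul0r.
Qed.

Lemma stops_atE n (w : traj S A n) :
  (stops_at term w)%:R = (0 < n)%:R * (\prod_(i < n) alive i (st w i)) * term_ind (st w n).
Proof.
rewrite prod_aliveE /stops_at /term_ind.
by case: (0 < n)%N; case: [forall _, _]; case: (_ \in _); rewrite /= ?mul0r ?mulr0 ?mulr1.
Qed.

Lemma sum_stops n (G : traj S A n -> R) :
  \sum_(w : traj S A n | stops_at term w) path_prob P s0 pi w * G w =
  (0 < n)%:R * \sum_(w : traj S A n) path_prob P s0 pi w *
     (\prod_(i < n) alive i (st w i)) * (G w * term_ind (st w n)).
Proof.
rewrite big_mkcond mulr_sumr; apply: eq_bigr => w _.
transitivity (path_prob P s0 pi w * G w * (stops_at term w)%:R).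
  by case: stops_at; rewrite /= ?mulr1 ?mulr0.
by rewrite stops_atE; ring.
Qed.

Lemma sum_stops_last n (L : S -> A -> R) :
  \sum_(w : traj S A n | stops_at term w) path_prob P s0 pi w * L (st w n) (act w n) =
  (0 < n)%:R * \sum_s mass n s * \sum_a pi s a * (L s a * term_ind s).
Proof.
by rewrite sum_stops -(@sum_path_wmarg _ _ _ P s0 pi alive n (fun s a => L s a * term_ind s)).
Qed.

Lemma sum_stops_return n (Rw : S -> R) :
  \sum_(w : traj S A n | stops_at term w)
    path_prob P s0 pi w * \sum_(1 <= t < n.+1) Rw (st w t) =
  (0 < n)%:R * \sum_s rew Rw n s * \sum_a pi s a * term_ind s.
Proof.
rewrite sum_stops -(@sum_path_wreward _ _ _ P s0 pi alive Rw n (fun s _ => term_ind s)).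
by congr (_ * _); apply: eq_bigr => w _; rewrite mulrA.
Qed.

Hypothesis hP : is_kernel P.
Hypothesis hpi : is_policy pi.
Hypothesis hterm : forall s a, s \in term -> forall s', P s a s' = rho s'.
Hypothesis hs0 : s0 \in term.

Lemma sum_pi1 s : \sum_a pi s a = 1.
Proof. by case: (hpi s). Qed.

Lemma ptrans_ge0 s s' : 0 <= ptrans P pi s s'.
Proof.
apply: sumr_ge0 => a _; apply: mulr_ge0; first by case: (hpi s) => ->.
by case: (hP s a) => ->.
Qed.

Lemma ptrans_sum1 s : \sum_s' ptrans P pi s s' = 1.
Proof.
rewrite /ptrans exchange_big /= -(sum_pi1 s); apply: eq_bigr => a _.
by rewrite -mulr_sumr; case: (hP s a) => _ ->; rewrite mulr1.
Qed.

Lemma ptrans_term s s' : s \in term -> ptrans P pi s s' = rho s'.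
Proof.
move=> s_term; rewrite /ptrans (eq_bigr (fun a => pi s a * rho s')) => [|a _].
  by rewrite -mulr_suml sum_pi1 mul1r.
by rewrite hterm.
Qed.

Lemma wmarg_ge0 (c : nat -> S -> R) n s :
  (forall i s, 0 <= c i s) -> 0 <= wmarg P s0 pi c n s.
Proof.
move=> c_ge0; elim: n s => [|n IH] s /=; first exact: ler0n.
by apply: sumr_ge0 => x _; rewrite !mulr_ge0 ?ptrans_ge0.
Qed.

Lemma alive_ge0 i s : 0 <= alive i s.
Proof. by rewrite /alive; case: eqP => // _; rewrite ler0n. Qed.

Lemma aliveE i s : alive i s = 1 - (0 < i)%:R * term_ind s.
Proof.
rewrite /alive /term_ind; case: i => [|i] /=; first by rewrite mul0r subr0.
by rewrite mul1r; case: (s \in term); rewrite ?subrr ?subr0.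
Qed.

Lemma mass_ge0 n s : 0 <= mass n s.
Proof. exact: wmarg_ge0 alive_ge0. Qed.

Lemma sum_alive_step (V : S -> R) n :
  \sum_s' \sum_s V s * alive n s * ptrans P pi s s' =
  \sum_s V s - (0 < n)%:R * \sum_s V s * term_ind s.
Proof.
rewrite exchange_big /= mulr_sumr -sumrB; apply: eq_bigr => s _.
by rewrite -mulr_sumr ptrans_sum1 mulr1 aliveE; ring.
Qed.

Lemma sum_mass0 : \sum_s mass 0 s = 1.
Proof. by rewrite /= (bigD1 s0) //= eqxx big1 ?addr0 // => s /negPf ->. Qed.

Lemma sum_massS n :
  \sum_s mass n.+1 s = \sum_s mass n s - (0 < n)%:R * \sum_s mass n s * term_ind s.
Proof. exact: sum_alive_step. Qed.

Lemma sum_rewS (Rw : S -> R) n : \sum_s rew Rw n.+1 s =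
  \sum_s rew Rw n s - (0 < n)%:R * \sum_s rew Rw n s * term_ind s + \sum_s mass n.+1 s * Rw s.
Proof. by rewrite /= big_split /= sum_alive_step. Qed.

Lemma rew1 n s : rew (fun _ => 1) n s = n%:R * mass n s.
Proof.
elim: n s => [|n IH] s /=; first by rewrite mul0r.
rewrite (eq_bigr (fun x => n%:R * (mass n x * alive n x * ptrans P pi x s))) => [|x _].
  by rewrite -mulr_sumr mulr1 -nat1r; ring.
by rewrite IH !mulrA.
Qed.

Lemma norm_rew_le (Rw : S -> R) n s :
  `|rew Rw n s| <= (\sum_x `|Rw x|) * n%:R * mass n s.
Proof.
elim: n s => [|n IH] s; first by rewrite /= normr0 mulr0 mul0r.
have -> : rew Rw n.+1 s =
  \sum_x rew Rw n x * alive n x * ptrans P pi x s + mass n.+1 s * Rw s by [].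
rewrite -natr1 mulrDr mulr1 mulrDl.
apply: (le_trans (ler_normD _ _)); apply: lerD.
  rewrite wmargS mulr_sumr; apply: (le_trans (ler_norm_sum _ _ _)); apply: ler_sum => x _.
  rewrite !normrM (ger0_norm (alive_ge0 _ _)) (ger0_norm (ptrans_ge0 _ _)) !mulrA.
  apply: ler_wpM2r; first exact: ptrans_ge0.
  by apply: ler_wpM2r; [exact: alive_ge0 | exact: IH].
rewrite normrM (ger0_norm (mass_ge0 _ _)) mulrC; apply: ler_wpM2r; first exact: mass_ge0.
by rewrite (bigD1 s) //= lerDl sumr_ge0.
Qed.

Definition stop_prob n := (0 < n)%:R * \sum_s mass n s * term_ind s.
Definition stop_time n := n%:R * stop_prob n.
Definition stop_return Rw n := (0 < n)%:R * \sum_s rew Rw n s * term_ind s.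
Definition occ N s := \sum_(t < N) mass t.+1 s.
Definition occupancy s := limn (occ ^~ s).

Lemma stop_prob_ge0 n : 0 <= stop_prob n.
Proof. by rewrite mulr_ge0 ?ler0n ?sumr_ge0 // => s _; rewrite mulr_ge0 ?mass_ge0 ?ler0n. Qed.

Lemma sum_pi_term_ind s : \sum_a pi s a * term_ind s = term_ind s.
Proof. by rewrite -mulr_suml sum_pi1 mul1r. Qed.

Lemma sum_stops_one n :
  \sum_(w : traj S A n | stops_at term w) path_prob P s0 pi w * 1 = stop_prob n.
Proof.
rewrite (sum_stops_last n (fun _ _ => 1)) /stop_prob; congr (_ * _).
by apply: eq_bigr => s _; under eq_bigr do rewrite mul1r; rewrite sum_pi_term_ind.
Qed.

Lemma sum_stops_time n :
  \sum_(w : traj S A n | stops_at term w) path_prob P s0 pi w * n%:R = stop_time n.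
Proof.
by rewrite /stop_time -sum_stops_one mulr_sumr; apply: eq_bigr => w _; rewrite mulrC mulr1.
Qed.

Lemma sum_stops_returnE Rw n :
  \sum_(w : traj S A n | stops_at term w)
    path_prob P s0 pi w * \sum_(1 <= t < n.+1) Rw (st w t) = stop_return Rw n.
Proof. by rewrite sum_stops_return; under eq_bigr do rewrite sum_pi_term_ind. Qed.

Lemma ProbT_finiteE : ProbT_finite P term s0 pi = limn (series stop_prob).
Proof. by rewrite /ProbT_finite /Estop /ssum (funext sum_stops_one). Qed.

Lemma summable_stop_timeE :
  summable_stop P term s0 pi (fun n _ => n%:R) = cvgn (series stop_time).
Proof. by rewrite /summable_stop /summable (funext sum_stops_time). Qed.

Lemma ETE : ET P term s0 pi = limn (series stop_time).
Proof. by rewrite /ET /Estop /ssum (funext sum_stops_time). Qed.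

Lemma JretE Rw : Jret P term s0 Rw pi = limn (series (stop_return Rw)).
Proof. by rewrite /Jret /Estop /ssum (funext (sum_stops_returnE Rw)). Qed.

Lemma sum_mass_series n : \sum_s mass n s = 1 - series stop_prob n.
Proof.
elim: n => [|n IH]; first by rewrite sum_mass0 /series /= big_geq // subr0.
by rewrite sum_massS IH seriesSr /stop_prob; ring.
Qed.

Lemma stop_return1 : stop_return (fun _ => 1) = stop_time.
Proof.
apply: funext => n; rewrite /stop_return /stop_time /stop_prob.
under eq_bigr do rewrite rew1 -mulrA.
by rewrite -mulr_sumr mulrCA.
Qed.

Lemma series_stop_return Rw N :
  series (stop_return Rw) N = \sum_s occ N s * Rw s - \sum_s rew Rw N s.
Proof.
elim: N => [|N IH].
  rewrite /series /= big_geq // big1 ?big1 ?subr0 // => s _.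
  by rewrite /occ big_ord0 mul0r.
rewrite seriesSr IH sum_rewS /stop_return /occ.
under [X in _ = X - _]eq_bigr do rewrite big_ord_recr /= mulrDl.
by rewrite big_split /=; ring.
Qed.

Hypothesis hT : ProbT_finite P term s0 pi = 1.
Hypothesis hE : summable_stop P term s0 pi (fun n _ => n%:R).

Local Notation ETpi := (ET P term s0 pi).

Lemma series_stop_prob_cvg : series stop_prob n @[n --> \oo] --> (1 : R).
Proof.
rewrite -hT ProbT_finiteE; apply: (nondecreasing_bounded_cvgn (M := 1)) => n.
  by rewrite seriesSr lerDl stop_prob_ge0.
by rewrite -subr_ge0 -sum_mass_series sumr_ge0 // => s _; exact: mass_ge0.
Qed.

Lemma sum_mass_cvg0 : \sum_s mass n s @[n --> \oo] --> (0 : R).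
Proof.
under eq_fun do rewrite sum_mass_series.
by rewrite -(subrr 1); apply: cvgB; [exact: cvg_cst | exact: series_stop_prob_cvg].
Qed.

Lemma series_stop_time_cvg : series stop_time n @[n --> \oo] --> ETpi.
Proof. by rewrite ETE; move: hE; rewrite summable_stop_timeE. Qed.

(* [n P(T >= n) <= E[T; T >= n]], the tail of a convergent series. *)
Lemma mass_tail_le n : n%:R * \sum_s mass n s <= ETpi - series stop_time n.
Proof.
rewrite sum_mass_series.
have lhs_cvg : n%:R * (series stop_prob m - series stop_prob n) @[m --> \oo] -->
    n%:R * (1 - series stop_prob n).
  by apply: cvgM; [exact: cvg_cst | apply: cvgB; [exact: series_stop_prob_cvg | exact: cvg_cst]].
have rhs_cvg : series stop_time m - series stop_time n @[m --> \oo] -->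
    ETpi - series stop_time n.
  by apply: cvgB; [exact: series_stop_time_cvg | exact: cvg_cst].
apply: (ler_cvg_to lhs_cvg rhs_cvg); near=> m.
have le_nm : (n <= m)%N by near: m; exists n.
rewrite !sub_series_geq // mulr_sumr; apply: ler_sum_nat => k /andP[le_nk _].
by rewrite /stop_time ler_wpM2r ?stop_prob_ge0 // ler_nat.
Unshelve. all: by end_near.
Qed.

Lemma mass_time_cvg0 : n%:R * \sum_s mass n s @[n --> \oo] --> (0 : R).
Proof.
apply: (squeeze_cvgr (f := fun _ => 0) (h := fun n => ETpi - series stop_time n)).
- near=> n; rewrite mass_tail_le andbT.
  by rewrite mulr_ge0 ?ler0n ?sumr_ge0 // => s _; exact: mass_ge0.
- exact: cvg_cst.
- by rewrite -(subrr ETpi); apply: cvgB; [exact: cvg_cst | exact: series_stop_time_cvg].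
Unshelve. all: by end_near.
Qed.

Lemma sum_rew_cvg0 Rw : \sum_s rew Rw n s @[n --> \oo] --> (0 : R).
Proof.
set C := \sum_x `|Rw x|.
have bound_cvg : C * (n%:R * \sum_s mass n s) @[n --> \oo] --> (0 : R).
  by rewrite -[X in _ --> X](mulr0 C); apply: cvgM; [exact: cvg_cst | exact: mass_time_cvg0].
have neg_bound_cvg : - (C * (n%:R * \sum_s mass n s)) @[n --> \oo] --> (0 : R).
  by rewrite -[X in _ --> X]oppr0; exact: cvgN.
apply: (squeeze_cvgr _ neg_bound_cvg bound_cvg).
near=> n; rewrite -ler_norml; apply: (le_trans (ler_norm_sum _ _ _)).
by rewrite !mulr_sumr; apply: ler_sum => s _; rewrite mulrA norm_rew_le.
Unshelve. all: by end_near.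
Qed.

Lemma sum_occ_le n : \sum_s occ n s <= ETpi.
Proof.
have := series_stop_return (fun _ => 1) n; rewrite stop_return1.
under eq_bigr do rewrite mulr1; under [X in _ = _ - X]eq_bigr do rewrite rew1.
rewrite -mulr_sumr => /eqP; rewrite eq_sym subr_eq => /eqP ->.
by rewrite -lerBrDl mass_tail_le.
Qed.

Lemma occ_cvg s : occ n s @[n --> \oo] --> occupancy s.
Proof.
apply: (nondecreasing_bounded_cvgn (M := ETpi)) => n.
  by rewrite /occ big_ord_recr lerDl mass_ge0.
apply: le_trans (sum_occ_le n); rewrite (bigD1 s) //= lerDl.
by apply: sumr_ge0 => x _; apply: sumr_ge0 => t _; exact: mass_ge0.
Qed.

Lemma series_stop_return_cvg Rw :
  series (stop_return Rw) n @[n --> \oo] --> \sum_s occupancy s * Rw s.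
Proof.
rewrite -[X in _ --> X]subr0; under eq_fun do rewrite series_stop_return.
apply: cvgB; last exact: sum_rew_cvg0.
by apply: cvg_fsum => s; apply: cvgM; [exact: occ_cvg | exact: cvg_cst].
Qed.

Lemma ET_occupancy : ETpi = \sum_s occupancy s.
Proof.
rewrite ETE -stop_return1; under [RHS]eq_bigr do rewrite -[occupancy _]mulr1.
exact/cvg_lim/series_stop_return_cvg.
Qed.

Lemma Jret_occupancy Rw : Jret P term s0 Rw pi = \sum_s occupancy s * Rw s.
Proof. by rewrite JretE; exact/cvg_lim/series_stop_return_cvg. Qed.

Lemma EQT_occupancy Q :
  EQT P term s0 Q pi = \sum_s occupancy s * \sum_a pi s a * (Q s a * term_ind s).
Proof.
set f := fun s => \sum_a pi s a * (Q s a * term_ind s).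
rewrite /EQT /Estop /ssum (funext (fun n => sum_stops_last n Q)) -/f.
set u := (fun n => _).
have seriesS n : series u n.+1 = \sum_s occ n s * f s.
  elim: n => [|n IH].
    by rewrite /series /= big_nat1 /u mul0r big1 // => s _; rewrite /occ big_ord0 mul0r.
  rewrite seriesSr IH /u /occ /=; under [RHS]eq_bigr do rewrite big_ord_recr /= mulrDl.
  by rewrite big_split /= mul1r.
apply/cvg_lim => //; rewrite -cvg_shiftS /=; under eq_fun do rewrite seriesS.
by apply: cvg_fsum => s; apply: cvgM; [exact: occ_cvg | exact: cvg_cst].
Qed.

Section ClosedClass.
Variable C : pred S.
Hypothesis C_nonterm : forall s, C s -> s \notin term.
Hypothesis C_closed : forall s, C s -> \sum_(s' | C s') ptrans P pi s s' = 1.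

Lemma sum_mass_closed_nd n :
  (0 < n)%N -> \sum_(s | C s) mass n s <= \sum_(s | C s) mass n.+1 s.
Proof.
move=> n_gt0.
apply: le_trans (_ : \sum_(s' | C s') \sum_(s | C s) mass n s * ptrans P pi s s' <= _).
  by rewrite exchange_big ler_sum // => s Cs; rewrite -mulr_sumr C_closed ?mulr1.
apply: ler_sum => s' _; rewrite wmargS [X in _ <= X](bigID C) /= -[X in X <= _]addr0.
apply: lerD; last by apply: sumr_ge0 => x _; rewrite !mulr_ge0 ?mass_ge0 ?alive_ge0 ?ptrans_ge0.
apply: ler_sum => s Cs; case: n n_gt0 => // n _.
by rewrite /alive /= (C_nonterm Cs) mulr1.
Qed.

(* Mass entering the closed nonterminal class [C] never leaves it, which is
   incompatible with [P(T < oo) = 1]. *)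
Lemma mass_closed0 k z : C z -> mass k.+1 z = 0.
Proof.
move=> Cz; apply/eqP; rewrite eq_le mass_ge0 andbT leNgt; apply/negP => mass_gt0.
have mass_le_C j : mass k.+1 z <= \sum_(s | C s) mass (j + k.+1) s.
  elim: j => [|j IH]; first by rewrite add0n (bigD1 z) // lerDl sumr_ge0 // => x _; exact: mass_ge0.
  by rewrite addSn; apply: le_trans IH (sum_mass_closed_nd _); rewrite addnS.
have mass_le n : (k.+1 <= n)%N -> mass k.+1 z <= \sum_s mass n s.
  move=> le_kn; rewrite -(subnK le_kn) (bigID C) /= -[X in X <= _]addr0.
  by apply: lerD; rewrite ?mass_le_C ?sumr_ge0 // => x _; exact: mass_ge0.
have : mass k.+1 z <= 0.
  apply: (ler_cvg_to (cvg_cst _) sum_mass_cvg0).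
  by near=> n; apply: mass_le; near: n; exists k.+1.
by rewrite leNgt mass_gt0.
Unshelve. all: by end_near.
Qed.

End ClosedClass.

Variable d : S -> R.
Hypothesis hstat : is_stationary P pi d.

Definition term_rate := \sum_s d s * term_ind s.
Definition excess s := d s - term_rate * occupancy s.

Lemma stationary_ge0 s : 0 <= d s.
Proof. by case: hstat => -[]. Qed.

Lemma stationary_killed s' :
  \sum_s d s * alive 1 s * ptrans P pi s s' = d s' - term_rate * rho s'.
Proof.
have stat_d : d s' = \sum_s d s * ptrans P pi s s'.
  case: hstat => _ ->; apply: eq_bigr => s _.
  by rewrite /ptrans mulr_sumr; apply: eq_bigr => a _; ring.
rewrite [in d s']stat_d /term_rate mulr_suml -sumrB; apply: eq_bigr => s _.
rewrite aliveE /term_ind; case s_term: (s \in term) => /=; last by ring.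
by rewrite ptrans_term //; ring.
Qed.

Lemma mass1 s' : mass 1 s' = rho s'.
Proof.
rewrite /= (bigD1 s0) //= eqxx big1 ?addr0 => [|s /negPf ->]; last by rewrite !mul0r.
by rewrite /alive !mul1r ptrans_term.
Qed.

Lemma occS N s' : occ N.+1 s' = rho s' + \sum_s occ N s * alive 1 s * ptrans P pi s s'.
Proof.
rewrite /occ big_ord_recl mass1; congr (_ + _).
under [RHS]eq_bigr do rewrite !mulr_suml.
by rewrite exchange_big.
Qed.

Lemma scaled_occ_le N s : term_rate * occ N s <= d s.
Proof.
elim: N s => [|N IH] s; first by rewrite /occ big_ord0 mulr0 stationary_ge0.
rewrite occS mulrDr mulr_sumr -[d s](subrK (term_rate * rho s)) -stationary_killed addrC.
rewrite lerD2r; apply: ler_sum => x _; rewrite !mulrA.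
apply: ler_wpM2r; first exact: ptrans_ge0.
by apply: ler_wpM2r; [exact: alive_ge0 | exact: IH].
Qed.

Lemma excess_ge0 s : 0 <= excess s.
Proof.
have occ_scaled_cvg : term_rate * occ N s @[N --> \oo] --> term_rate * occupancy s.
  by apply: cvgM; [exact: cvg_cst | exact: occ_cvg].
rewrite subr_ge0; apply: (ler_cvg_to occ_scaled_cvg (cvg_cst (d s))).
by near=> N; exact: scaled_occ_le.
Unshelve. all: by end_near.
Qed.

Lemma occupancy_recl s' :
  occupancy s' = rho s' + \sum_s occupancy s * alive 1 s * ptrans P pi s s'.
Proof.
have occS_cvg : occ N.+1 s' @[N --> \oo] --> occupancy s'.
  by rewrite (cvg_shiftS (occ ^~ s')); exact: occ_cvg.
have occS_rhs : occ N.+1 s' @[N --> \oo] -->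
    rho s' + \sum_s occupancy s * alive 1 s * ptrans P pi s s'.
  under eq_fun do rewrite occS.
  apply: cvgD; first exact: cvg_cst.
  apply: cvg_fsum => s; apply: cvgM; last exact: cvg_cst.
  by apply: cvgM; [exact: occ_cvg | exact: cvg_cst].
exact: cvg_unique occS_cvg occS_rhs.
Qed.

Lemma excess_invariant s' : excess s' = \sum_s excess s * alive 1 s * ptrans P pi s s'.
Proof.
rewrite /excess occupancy_recl mulrDr opprD addrA -stationary_killed mulr_sumr -sumrB.
by apply: eq_bigr => s _; ring.
Qed.

Lemma excess_term s : s \in term -> excess s = 0.
Proof.
move=> s_term.
have : \sum_s excess s * term_ind s = 0.
  have : \sum_s' excess s' = \sum_s excess s - \sum_s excess s * term_ind s.
    rewrite {1}(eq_bigr _ (fun s' _ => excess_invariant s')) exchange_big -sumrB /=.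
    by apply: eq_bigr => x _; rewrite -mulr_sumr ptrans_sum1 aliveE mul1r; ring.
  by move: (\sum_s excess s) (\sum_s excess s * term_ind s) => a b; lra.
move/psumr_eq0P => /(_ (fun x _ => mulr_ge0 (excess_ge0 x) (ler0n _ _))) /(_ s isT).
by rewrite /term_ind s_term mulr1.
Qed.

Lemma excess_pos_nonterm s : 0 < excess s -> s \notin term.
Proof. by apply: contraTN => /excess_term ->; rewrite ltxx. Qed.

Lemma excess_support_closed s :
  0 < excess s -> \sum_(s' | 0 < excess s') ptrans P pi s s' = 1.
Proof.
move=> excess_gt0.
have le_excess s' : excess s * ptrans P pi s s' <= excess s'.
  rewrite [X in _ <= X]excess_invariant (bigD1 s) //= {1}/alive /= (excess_pos_nonterm excess_gt0).
  rewrite mulr1 lerDl.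
  by apply: sumr_ge0 => x _; rewrite !mulr_ge0 ?excess_ge0 ?alive_ge0 ?ptrans_ge0.
rewrite -(ptrans_sum1 s) [RHS](bigID (fun s' => 0 < excess s')) /= [X in _ = _ + X]big1 ?addr0 //.
move=> s' /negPf excess'_le0; apply/eqP; rewrite eq_le ptrans_ge0 andbT.
rewrite -(pmulr_rle0 _ excess_gt0) (le_trans (le_excess s')) //.
by rewrite leNgt excess'_le0.
Qed.

End Episode.

Lemma prob_stateE (R : realType) (S A : finType) (P : S -> A -> S -> R) (s0 : S)
    (pi : S -> A -> R) t c :
  is_policy pi -> prob_state P s0 pi t c = wmarg P s0 pi (fun _ _ => 1) t c.
Proof.
move=> hpi; rewrite /prob_state big_mkcond.
transitivity (\sum_(w : traj S A t) path_prob P s0 pi w *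
    (\prod_(i < t) (fun _ _ => 1 : R) i (st w i)) * (st w t == c)%:R).
  by apply: eq_bigr => w _; rewrite big1 // mulr1; case: eqP; rewrite ?mulr1 ?mulr0.
rewrite (@sum_path_wmarg _ _ _ P s0 pi (fun _ _ => 1) t (fun s _ => (s == c)%:R)) (bigD1 c) //=.
rewrite [X in _ + X]big1 ?addr0 => [|s /negPf s_neq_c].
  by under eq_bigr do rewrite eqxx mulr1; rewrite (sum_pi1 hpi) mulr1.
by rewrite big1 ?mulr0 // => a _; rewrite s_neq_c mulr0.
Qed.

Section Reachability.
Variables (R : realType) (S A : finType) (P : S -> A -> S -> R) (term : {set S}) (s0 : S).
Variables (rho : S -> R) (pi pi' : S -> A -> R) (C : pred S).
Hypothesis hP : is_kernel P.
Hypothesis hpi : is_policy pi.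
Hypothesis hpi' : is_policy pi'.
Hypothesis hterm : forall s a, s \in term -> forall s', P s a s' = rho s'.
Hypothesis hs0 : s0 \in term.
Hypothesis C_nonterm : forall s, C s -> s \notin term.
Hypothesis C_closed : forall s, C s -> \sum_(s' | C s') ptrans P pi s s' = 1.

Definition patch (s : S) (a : A) : R := if C s then pi s a else pi' s a.

Hypothesis hT_patch : ProbT_finite P term s0 patch = 1.

Local Notation mass := (wmarg P s0 patch (alive R term)).

Lemma patch_policy : is_policy patch.
Proof. by move=> s; rewrite /patch; case: (C s). Qed.

Lemma ptrans_patch s s' :
  ptrans P patch s s' = if C s then ptrans P pi s s' else ptrans P pi' s s'.
Proof. by rewrite /ptrans /patch; case: (C s). Qed.

Lemma mass_patch_closed0 k z : C z -> mass k.+1 z = 0.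
Proof.
apply: (mass_closed0 hP patch_policy hT_patch C_nonterm) => s Cs.
by under eq_bigr do rewrite ptrans_patch Cs; exact: C_closed.
Qed.

(* A state visited by [pi'] is terminal or carries alive mass under [patch]:
   the path leading to it cannot pass through [C], where that mass vanishes. *)
Lemma reach_patch t y :
  0 < wmarg P s0 pi' (fun _ _ => 1) t y -> y \in term \/ exists k, 0 < mass k.+1 y.
Proof.
elim: t y => [|t IH] y; first by rewrite /=; case: eqP => [->|_]; [left | rewrite ltxx].
rewrite [wmarg _ _ _ _ _ _]/= => /gt_eqF/negbT/eqP/psumr_neq0P[x _|x /andP[_]].
  by rewrite mulr_ge0 ?mulr1 ?ptrans_ge0 ?wmarg_ge0.
rewrite mulr1 mulr_ge0_gt0 ?ptrans_ge0 ?wmarg_ge0 // => /andP[/IH reach_x ptrans_gt0].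
right; have [x_term|x_nonterm] := boolP (x \in term).
  by exists 0%N; rewrite (mass1 patch_policy hterm hs0) -(ptrans_term hpi' hterm y x_term).
have [k mass_gt0] : exists k, 0 < mass k.+1 x.
  by case: reach_x => // x_term; rewrite x_term in x_nonterm.
have Cx : ~~ C x by apply: contraTN mass_gt0 => Cx; rewrite mass_patch_closed0 ?ltxx.
exists k.+1; apply: lt_le_trans (_ : mass k.+1 x * alive R term k.+1 x * ptrans P patch x y <= _).
  by rewrite /alive /= x_nonterm mulr1 ptrans_patch (negPf Cx) mulr_gt0.
rewrite [mass k.+2 y]wmargS (bigD1 x) // lerDl.
apply: sumr_ge0 => s _; rewrite !mulr_ge0 ?alive_ge0 ?(ptrans_ge0 hP patch_policy) //.
exact: (wmarg_ge0 _ hP patch_policy _ _ (@alive_ge0 _ _ term)).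
Qed.

Lemma closed_unreachable t c : C c -> prob_state P s0 pi' t c = 0.
Proof.
move=> Cc; rewrite prob_stateE //; apply/eqP; rewrite eq_le wmarg_ge0 // andbT.
rewrite leNgt; apply/negP => /reach_patch[c_term|[k]].
  by move: (C_nonterm Cc); rewrite c_term.
by rewrite mass_patch_closed0 ?ltxx.
Qed.

End Reachability.

Lemma sum_stationary_bellman (R : realType) (S A : finType) (P : S -> A -> S -> R)
    (term : {set S}) (pi : S -> A -> R) (d Rw : S -> R) (Q : S -> A -> R) :
  is_stationary P pi d ->
  \sum_s \sum_a d s * pi s a * bellman P term Rw Q s a =
  \sum_s' d s' * (Rw s' + (s' \notin term)%:R * qmax Q s').
Proof.
case=> _ stat_d; rewrite /bellman.
under eq_bigr do under eq_bigr do rewrite mulr_sumr.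
under eq_bigr do rewrite exchange_big.
rewrite exchange_big; apply: eq_bigr => s' _; rewrite stat_d !mulr_suml.
by apply: eq_bigr => s _; rewrite mulr_suml; apply: eq_bigr => a _; ring.
Qed.

Lemma lagrangian_stationary (R : realType) (S A : finType) (P : S -> A -> S -> R)
    (term : {set S}) (Rw : S -> R) (pi : S -> A -> R) (d : S -> R) (Q : S -> A -> R) (E : R) :
  is_policy pi -> is_stationary P pi d ->
  \sum_s E * d s * \sum_a pi s a * (Q s a * term_ind R term s) +
    \sum_s \sum_a d s * pi s a * E * (bellman P term Rw Q s a - Q s a) =
  \sum_s E * d s * Rw s +
    \sum_(s | s \notin term) \sum_a d s * pi s a * E * (qmax Q s - Q s a).
Proof.
move=> hpi hstat.
have lam_split s : \sum_a d s * pi s a * E * (bellman P term Rw Q s a - Q s a) =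
    E * \sum_a d s * pi s a * bellman P term Rw Q s a - E * d s * \sum_a pi s a * Q s a.
  by rewrite !mulr_sumr -sumrB; apply: eq_bigr => a _; ring.
rewrite (eq_bigr _ (fun s _ => lam_split s)) sumrB -mulr_sumr sum_stationary_bellman //.
rewrite [X in _ = _ + X]big_mkcond mulr_sumr -sumrB -!big_split /=; apply: eq_bigr => s _.
have qmax_split : \sum_a d s * pi s a * E * (qmax Q s - Q s a) =
    E * d s * qmax Q s - E * d s * \sum_a pi s a * Q s a.
  rewrite (eq_bigr (fun a => E * d s * qmax Q s * pi s a - E * d s * (pi s a * Q s a))).
    by rewrite sumrB -!mulr_sumr (sum_pi1 hpi) mulr1.
  by move=> a _; ring.
have piQ_term :
    \sum_a pi s a * (Q s a * term_ind R term s) = term_ind R term s * \sum_a pi s a * Q s a.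
  by rewrite mulr_sumr; apply: eq_bigr => a _; ring.
by rewrite qmax_split piQ_term /term_ind; case: (s \in term) => /=; ring.
Qed.

Section StationaryOccupancy.
Variables (R : realType) (S A : finType) (P : S -> A -> S -> R) (term : {set S}) (s0 : S).
Variables (rho : S -> R) (pi : S -> A -> R) (d : S -> R).
Hypothesis hP : is_kernel P.
Hypothesis hpi : is_policy pi.
Hypothesis hterm : forall s a, s \in term -> forall s', P s a s' = rho s'.
Hypothesis hs0 : s0 \in term.
Hypothesis hall : forall pi', is_policy pi' ->
  ProbT_finite P term s0 pi' = 1 /\ summable_stop P term s0 pi' (fun n _ => n%:R).
Hypothesis hreach : forall s, exists pi', is_policy pi' /\ exists t, 0 < prob_state P s0 pi' t s.
Hypothesis hstat : is_stationary P pi d.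

Let hT := (hall hpi).1.
Let hE := (hall hpi).2.

(* The support of the excess is closed and nonterminal; a policy following [pi]
   there and a reaching policy elsewhere would never terminate. *)
Lemma excess_eq0 s : excess P term s0 pi d s = 0.
Proof.
apply/eqP; rewrite eq_le (excess_ge0 hP hpi hterm hs0 hT hE hstat) andbT leNgt.
apply/negP => excess_gt0.
have [pi' [hpi' [t reach_s]]] := hreach s.
pose C s := 0 < excess P term s0 pi d s.
have C_nonterm s' : C s' -> s' \notin term.
  exact: (excess_pos_nonterm hP hpi hterm hs0 hT hE hstat).
have C_closed s' : C s' -> \sum_(s'' | C s'') ptrans P pi s' s'' = 1.
  exact: (excess_support_closed hP hpi hterm hs0 hT hE hstat).
have hT_patch := (hall (patch_policy C hpi hpi')).1.
have := closed_unreachable hP hpi hpi' hterm hs0 C_nonterm C_closed hT_patch t excess_gt0.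
by move=> unreachable; rewrite unreachable ltxx in reach_s.
Qed.

Lemma occupancy_stationary s : occupancy P term s0 pi s = ET P term s0 pi * d s.
Proof.
have d_occ s' : d s' = term_rate term d * occupancy P term s0 pi s'.
  by apply/eqP; rewrite -subr_eq0; apply/eqP; exact: excess_eq0.
have rate_ET : term_rate term d * ET P term s0 pi = 1.
  rewrite (ET_occupancy hP hpi hT hE) mulr_sumr; case: hstat => -[_ <-] _.
  by apply: eq_bigr => s' _; rewrite d_occ.
by rewrite d_occ mulrA (mulrC _ (term_rate _ _)) rate_ET mul1r.
Qed.

End StationaryOccupancy.

Theorem mainTheorem5 (R : realType) (S A : finType)
  (P : S -> A -> S -> R) (Rw : S -> R) (rho : S -> R)
  (term : {set S}) (s0 : S)
  (hELP : is_ELP P term s0 Rw rho)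
  (pi : S -> A -> R) (hpi : is_policy pi)
  (rho_pi : S -> R) (hstat : is_stationary P pi rho_pi)
  (Q : S -> A -> R) :
  let lam := fun s a => rho_pi s * pi s a * ET P term s0 pi in
  lagr P term s0 Rw pi Q lam =
    Jret P term s0 Rw pi +
    \sum_(s : S | s \notin term) \sum_(a : A) lam s a * (qmax Q s - Q s a).
Proof.
move=> lam; case: hELP => -[hP _ [_ hs0] hterm hall] hreach.
have [hT hE] := hall pi hpi.
have occ_stat := occupancy_stationary hP hpi hterm hs0 hall hreach hstat.
rewrite /lagr (EQT_occupancy hP hpi hT hE) (Jret_occupancy hP hpi hT hE).
under eq_bigr do rewrite occ_stat; under [in RHS]eq_bigr do rewrite occ_stat.
exact: lagrangian_stationary.
Qed.
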